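(* Let $(Y_t,X_{t-\delta})$ and $(\tilde Y_0,\tilde X_{-\delta})$ be two pairs of random variables, each on $\mathcal Y\times\mathcal X$ with $\mathcal Y,\mathcal X$ finite, and let $L$ be a loss function on $\mathcal Y\times\mathcal A$. If for all $x\in\mathcal X$ $$D_{\chi^2}\big(P_{Y_t|X_{t-\delta}=x}\,\|\,P_{\tilde Y_0|\tilde X_{-\delta}=x}\big)\le\beta^2,$$ then $$H_L(Y_t;\tilde Y_0|X_{t-\delta})=H_L(Y_t|X_{t-\delta})+O(\beta).$$
   Context: $L:\mathcal Y\times\mathcal A\to\mathbb R$ is a loss function (minima attained). For a distribution $P$ on $\mathcal Y$, a Bayes action $a_P$ is a minimizer of $a\mapsto\mathbb E_{Y\sim P}[L(Y,a)]$. $H_L(Y|X=x)=\min_{a}\mathbb E_{Y\sim P_{Y|X=x}}[L(Y,a)]$ and $H_L(Y|X)=\sum_xP_X(x)H_L(Y|X=x)$. The $L$-conditional cross entropy is $H_L(Y_t;\tilde Y_0|X_{t-\delta})=\sum_{x\in\mathcal X}P_{X_{t-\delta}}(x)\,\mathbb E_{Y\sim P_{Y_t|X_{t-\delta}=x}}\big[L(Y,a_{P_{\tilde Y_0|\tilde X_{-\delta}=x}})\big]$. Neyman's $\chi^2$-divergence $D_{\chi^2}(P\|Q)=\sum_y\frac{(P(y)-Q(y))^2}{Q(y)}$ ($0^2/0=0$). Big-O is as $\beta\to0$. *)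

From mathcomp Require Import all_boot all_order all_algebra.
From mathcomp Require Import all_classical all_reals.
From mathcomp Require Import ereal.
Set Implicit Arguments. Unset Strict Implicit. Unset Printing Implicit Defensive.
Import Order.TTheory GRing.Theory Num.Theory.
Local Open Scope ring_scope.
Local Open Scope classical_set_scope.

Section Defs.
Variable R : realType.

Definition is_distr (T : finType) (p : T -> R) : Prop :=
  (forall t, 0 <= p t) /\ \sum_(t : T) p t = 1.

Definition risk (Y : finType) (A : Type) (L : Y -> A -> R) (p : Y -> R) (a : A) : R :=
  \sum_(y : Y) p y * L y a.

Definition is_bayes (Y : finType) (A : Type) (L : Y -> A -> R) (p : Y -> R) (a : A) : Prop :=
  forall a' : A, risk L p a <= risk L p a'.

(* H_L for a single (conditional) distribution: min_a E_p[L(Y,a)] (taken as an infimum;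
   minima are attained by hypothesis) *)
Definition HLpt (Y : finType) (A : Type) (L : Y -> A -> R) (p : Y -> R) : R :=
  inf (range (risk L p)).

(* H_L(Y|X) = sum_x P_X(x) H_L(Y|X=x); PYX x is the conditional law P_{Y|X=x} *)
Definition HLcond (Y X : finType) (A : Type) (L : Y -> A -> R)
  (PX : X -> R) (PYX : X -> Y -> R) : R :=
  \sum_(x : X) PX x * HLpt L (PYX x).

(* L-conditional cross entropy, aQ x being a Bayes action of P_{~Y0|~X=x} *)
Definition HLcross (Y X : finType) (A : Type) (L : Y -> A -> R)
  (PX : X -> R) (PYX : X -> Y -> R) (aQ : X -> A) : R :=
  \sum_(x : X) PX x * risk L (PYX x) (aQ x).

Definition chi2 (Y : finType) (p q : Y -> R) : \bar R :=
  (\sum_(y : Y)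
     (if q y == 0%R then (if p y == 0%R then 0%E else +oo%E)
      else (((p y - q y) ^+ 2) / q y)%R%:E))%E.

End Defs.

(** Write [μ := kβ] with [k] large enough in terms of the smallest nonzero mass
    of [Q x].  The χ²-bound gives [|P x - Q x| <= μ Q x] pointwise, so [P x] is
    the mixture [(1 - μ) Q x + μ S] of [Q x] with some distribution [S].  Since
    [aQ x] is optimal for [Q x], the regret of [aQ x] under [P x] is at most
    [μ] times its regret under [S], which is bounded because the losses of the
    finitely many actions [aQ x] are bounded above and every loss is bounded
    below by the loss of a pointwise Bayes action. *)

From mathcomp Require Import all_boot all_order all_algebra.
From mathcomp Require Import all_classical all_reals.
From mathcomp Require Import ereal.
From mathcomp Require Import ring lra.
Set Implicit Arguments. Unset Strict Implicit. Unset Printing Implicit Defensive.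
Import Order.TTheory GRing.Theory Num.Theory.
Local Open Scope ring_scope.

Section FiniteBounds.
Variable R : realType.

Lemma finite_ubound (T : finType) (F : T -> R) : exists c, forall t, F t <= c.
Proof. by exists (\big[Num.max/0]_t F t) => t; apply: le_bigmax. Qed.

Lemma support_mass_lbound (T : finType) (q : T -> R) :
  (forall t, 0 <= q t) ->
  exists2 k, 1 <= k & forall t, q t != 0 -> 1 <= k ^+ 2 * q t.
Proof.
move=> q0; have [u qinv] := finite_ubound (fun t => (q t)^-1).
exists (Num.max 1 u) => [|t qt]; first by rewrite le_max lexx.
have qt_gt0 : 0 < q t by rewrite lt_def qt q0.
have k_ge1 : 1 <= Num.max 1 u by rewrite le_max lexx.
apply: (@le_trans _ _ (Num.max 1 u * q t)).
  rewrite -(mulVf qt) ler_pM2r //; apply: le_trans (qinv t) _.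
  by rewrite le_max lexx orbT.
by rewrite ler_pM2r // expr2 ler_peMl // (le_trans ler01).
Qed.

Variable Y : finType.

Lemma distr_avg_le (p F : Y -> R) (c : R) :
  is_distr p -> (forall y, F y <= c) -> \sum_y p y * F y <= c.
Proof.
move=> [p0 p1] Fc; rewrite -[leRHS]mul1r -p1 mulr_suml.
by apply: ler_sum => y _; rewrite ler_wpM2l.
Qed.

Lemma distr_avg_ge (p F : Y -> R) (c : R) :
  is_distr p -> (forall y, c <= F y) -> c <= \sum_y p y * F y.
Proof.
move=> [p0 p1] cF; rewrite -[leLHS]mul1r -p1 mulr_suml.
by apply: ler_sum => y _; rewrite ler_wpM2l.
Qed.

Definition dirac_distr (y0 y : Y) : R := (y == y0)%:R.

Lemma dirac_distrE (y0 : Y) (F : Y -> R) : \sum_y dirac_distr y0 y * F y = F y0.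
Proof.
rewrite (bigD1 y0) //= big1 => [|y /negPf]; first by rewrite /dirac_distr eqxx mul1r addr0.
by rewrite /dirac_distr => ->; rewrite mul0r.
Qed.

Lemma is_distr_dirac (y0 : Y) : is_distr (dirac_distr y0).
Proof.
split=> [y|]; first exact: ler0n.
by have := dirac_distrE y0 (fun=> 1); under eq_bigr do rewrite mulr1.
Qed.

End FiniteBounds.

Section Chi2.
Variables (R : realType) (Y : finType).

Lemma chi2_abs_sub_le (p q : Y -> R) (b k : R) :
  (forall y, 0 <= q y) -> 0 <= b -> 0 <= k ->
  (forall y, q y != 0 -> 1 <= k ^+ 2 * q y) ->
  (chi2 p q <= (b ^+ 2)%:E)%E -> forall y, `|p y - q y| <= k * b * q y.
Proof.
move=> q0 b0 k0 kq chi2b y.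
pose term z := if q z == 0 then (if p z == 0 then 0%E else +oo%E)
               else (((p z - q z) ^+ 2) / q z)%:E.
have term_ge0 z : (0 <= term z)%E.
  rewrite /term; case: eqP => [_|_]; first by case: eqP.
  by rewrite lee_fin divr_ge0 ?sqr_ge0.
have term_le : (term y <= (b ^+ 2)%:E)%E.
  apply: le_trans chi2b; rewrite /chi2 (bigD1 y) //=.
  by apply: leeDl; apply: sume_ge0 => z _; exact: term_ge0.
move: term_le; rewrite /term; have [qy|qy] := eqVneq (q y) 0.
  by rewrite qy; case: eqP => [->|//]; rewrite subr0 normr0 mulr0.
rewrite lee_fin ler_pdivrMr ?lt_def ?qy ?q0 // => sqr_le.
have kbq0 : 0 <= k * b * q y by rewrite !mulr_ge0.
rewrite -ler_sqr ?nnegrE ?normr_ge0 // real_normK ?num_real //.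
apply: (le_trans sqr_le).
have -> : (k * b * q y) ^+ 2 = b ^+ 2 * q y * (k ^+ 2 * q y) by ring.
by rewrite ler_peMr ?mulr_ge0 ?sqr_ge0 ?kq.
Qed.

Lemma distr_mixture (p q : Y -> R) (mu : R) :
  is_distr p -> is_distr q -> 0 <= mu ->
  (forall y, `|p y - q y| <= mu * q y) ->
  exists2 s, is_distr s & forall y, p y = (1 - mu) * q y + mu * s y.
Proof.
move=> [_ p1] [q0 q1] mu0 close.
have [mu_eq0|mu_neq0] := eqVneq mu 0.
  exists q => // y; have := close y.
  by rewrite mu_eq0 !mul0r normr_le0 subr_eq0 subr0 mul1r addr0 => /eqP.
exists (fun y => q y + (p y - q y) / mu); last by move=> y; field.
have mu_gt0 : 0 < mu by rewrite lt_def mu_neq0.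
split=> [y|]; last by rewrite big_split /= -mulr_suml sumrB p1 q1 subrr mul0r addr0.
have [lo _] := ler_normlP _ _ (close y).
have -> : q y + (p y - q y) / mu = (mu * q y + (p y - q y)) / mu by field.
by apply: divr_ge0; [rewrite -lerBlDr sub0r | exact: ltW].
Qed.

End Chi2.

Section Regret.
Variables (R : realType) (Y : finType) (A : Type) (L : Y -> A -> R).

Lemma risk_mixture {p q s : Y -> R} {mu : R} (a : A) :
  (forall y, p y = (1 - mu) * q y + mu * s y) ->
  risk L p a = (1 - mu) * risk L q a + mu * risk L s a.
Proof.
move=> mix; rewrite /risk !mulr_sumr -big_split; apply: eq_bigr => y _.
by rewrite mix mulrDl !mulrA.
Qed.

Lemma bayes_regret_mixture (p q s : Y -> R) (mu : R) (aq a : A) :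
  is_bayes L q aq -> mu <= 1 ->
  (forall y, p y = (1 - mu) * q y + mu * s y) ->
  risk L p aq - risk L p a <= mu * (risk L s aq - risk L s a).
Proof.
move=> aq_bayes mu1 mix; rewrite !(risk_mixture _ mix).
have : 0 <= (1 - mu) * (risk L q a - risk L q aq).
  by rewrite mulr_ge0 ?subr_ge0 ?aq_bayes.
lra.
Qed.

Lemma HLpt_regret_bounds (p : Y -> R) (a0 : A) (c : R) :
  (forall a, risk L p a0 - risk L p a <= c) ->
  0 <= risk L p a0 - HLpt L p <= c.
Proof.
move=> regret; have lb : lbound (range (risk L p)) (risk L p a0 - c).
  by move=> _ [a _ <-]; rewrite lerBlDr addrC -lerBlDr.
apply/andP; split; rewrite ?subr_ge0 ?lerBlDr -?lerBlDl.
  by apply: ge_inf; [exists (risk L p a0 - c) | exists a0].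
by apply: lb_le_inf => //; exists (risk L p a0), a0.
Qed.

Lemma loss_lbound :
  (forall p : Y -> R, is_distr p -> exists a, is_bayes L p a) ->
  exists c, forall y a, c <= L y a.
Proof.
move=> bayes_exists.
have /boolp.choice [f f_min] y : exists b, forall a, L y b <= L y a.
  have [b b_bayes] := bayes_exists _ (is_distr_dirac _ y).
  by exists b => a; have := b_bayes a; rewrite /risk !dirac_distrE.
have [c Lc] := finite_ubound (fun y => - L y (f y)).
exists (- c) => y a; rewrite lerNl; apply: le_trans (Lc y).
by rewrite lerN2 f_min.
Qed.

Lemma bayes_regret_chi2 (p q : Y -> R) (aq : A) (b k m c : R) :
  is_distr p -> is_distr q -> is_bayes L q aq ->
  0 <= b -> 0 <= k -> k * b <= 1 ->
  (forall y, q y != 0 -> 1 <= k ^+ 2 * q y) ->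
  (chi2 p q <= (b ^+ 2)%:E)%E ->
  (forall y a, c <= L y a) -> (forall y, L y aq <= m) ->
  forall a, risk L p aq - risk L p a <= k * b * (m - c).
Proof.
move=> pd qd aq_bayes b0 k0 kb1 kq chi2b Lc Lm a.
have close := chi2_abs_sub_le qd.1 b0 k0 kq chi2b.
have [s sd mix] := distr_mixture pd qd (mulr_ge0 k0 b0) close.
apply: le_trans (bayes_regret_mixture a aq_bayes kb1 mix) _.
by rewrite ler_wpM2l ?mulr_ge0 // lerB ?distr_avg_le ?distr_avg_ge.
Qed.

End Regret.

Theorem lemma3p7 (R : realType) (Y X : finType) (A : Type) (L : Y -> A -> R)
  (Lmin : forall p : Y -> R, is_distr p -> exists a : A, is_bayes L p a)
  (Q : X -> Y -> R) (HQ : forall x, is_distr (Q x))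
  (aQ : X -> A) (HaQ : forall x, is_bayes L (Q x) (aQ x)) :
  exists C beta0 : R, 0 < beta0 /\
    forall (beta : R) (PX : X -> R) (P : X -> Y -> R),
      0 <= beta -> beta <= beta0 ->
      is_distr PX -> (forall x, is_distr (P x)) ->
      (forall x, (chi2 (P x) (Q x) <= (beta ^+ 2)%:E)%E) ->
      `| HLcross L PX P aQ - HLcond L PX P | <= C * beta.
Proof.
have [c Lc] := loss_lbound Lmin.
have [m Lm] := finite_ubound (fun xy : X * Y => L xy.2 (aQ xy.1)).
have [k k_ge1 kQ] := support_mass_lbound (fun xy : X * Y => (HQ xy.1).1 xy.2).
have k_gt0 : 0 < k := lt_le_trans ltr01 k_ge1.
exists (k * (m - c)), k^-1; split=> [|beta PX P b0 bk PXd Pd chi2b]; first by rewrite invr_gt0.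
have kb1 : k * beta <= 1.
  by have := ler_wpM2l (ltW k_gt0) bk; rewrite mulfV // lt0r_neq0.
have regret x : 0 <= risk L (P x) (aQ x) - HLpt L (P x) <= k * beta * (m - c).
  apply: HLpt_regret_bounds => a.
  apply: (bayes_regret_chi2 (Pd x) (HQ x) (HaQ x) b0 (ltW k_gt0) kb1 _ (chi2b x) Lc).
    by move=> y; apply: (kQ (x, y)).
  by move=> y; apply: (Lm (x, y)).
have -> : HLcross L PX P aQ - HLcond L PX P =
    \sum_x PX x * (risk L (P x) (aQ x) - HLpt L (P x)).
  by rewrite -sumrB; apply: eq_bigr => x _; rewrite mulrBr.
rewrite ger0_norm; last by apply: distr_avg_ge => // x; case/andP: (regret x).
by rewrite mulrAC; apply: distr_avg_le => // x; case/andP: (regret x).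
Qed.
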